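(* Every unit interval graph has twin-width at most $2$.
   Context: A unit interval graph is the intersection graph of a finite family of closed intervals of the real line all having the same length. A trigraph $H$ consists of a vertex set $V(H)$ and two disjoint sets of unordered pairs of distinct vertices: black edges $E(H)$ and red edges $R(H)$. Two vertices are adjacent (neighbors) if they are joined by a black or a red edge. The red graph of $H$ is the graph $(V(H),R(H))$; $H$ is a $d$-trigraph if its red graph has maximum degree at most $d$. A graph is a trigraph with no red edges. Contracting two distinct vertices $u,v$ of a trigraph $H$ yields the trigraph obtained by deleting $u$ and $v$ and adding a new vertex $z$ such that, for every other vertex $x$: $zx$ is a black edge if both $ux$ and $vx$ are black edges; $zx$ is not an edge if $x$ is adjacent to neither $u$ nor $v$; and $zx$ is a red edge otherwise. All edges not incident to $u$ or $v$ are unchanged. A $d$-sequence of an $n$-vertex graph $G$ is a sequence of $d$-trigraphs $G=G_n,G_{n-1},\dots,G_1$ such that $G_1$ has a single vertex and each $G_{i-1}$ is obtained from $G_i$ by one contraction (so $G_i$ has $i$ vertices). The twin-width $\mathrm{tww}(G)$ of $G$ is the minimum $d$ such that $G$ admits a $d$-sequence. *)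

From Stdlib Require Import Reals.
From mathcomp Require Import all_boot.

Set Implicit Arguments.
Unset Strict Implicit.
Unset Printing Implicit Defensive.

Definition simple_graph (T : finType) (e : rel T) : Prop :=
  symmetric e /\ irreflexive e.

Definition unit_interval_graph (T : finType) (e : rel T) : Prop :=
  exists (L : R) (a : T -> R), Rlt 0 L /\
    forall x y : T, x != y ->
      (e x y <-> exists t : R,
          (Rle (a x) t /\ Rle t (a x + L)) /\ (Rle (a y) t /\ Rle t (a y + L))).

Record trigraph (T : finType) := Trigraph {
  tverts : {set T};
  tblack : rel T;
  tred   : rel T
}.

Definition tadj (T : finType) (H : trigraph T) (x y : T) : bool :=
  tblack H x y || tred H x y.

Definition graph_trigraph (T : finType) (e : rel T) : trigraph T :=
  @Trigraph T setT e (fun _ _ => false).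

(* Contraction of u and v into a new vertex z (z is any name not among the
   remaining vertices V(H) \ {u,v}). *)
Definition contract (T : finType) (H : trigraph T) (u v z : T) : trigraph T :=
  let V' := z |: (tverts H :\ u :\ v) in
  let blkz y := tblack H u y && tblack H v y in
  let redz y := ~~ blkz y && (tadj H u y || tadj H v y) in
  @Trigraph T V'
    (fun x y => [&& x \in V', y \in V', x != y &
       if x == z then blkz y else if y == z then blkz x else tblack H x y])
    (fun x y => [&& x \in V', y \in V', x != y &
       if x == z then redz y else if y == z then redz x else tred H x y]).

Definition contraction_step (T : finType) (H H' : trigraph T) : Prop :=
  exists u v z : T, [/\ u \in tverts H, v \in tverts H, u != v,
     z \notin (tverts H :\ u :\ v) & H' = contract H u v z].

Definition d_trigraph (T : finType) (d : nat) (H : trigraph T) : Prop :=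
  forall x, x \in tverts H -> #|[set y in tverts H | tred H x y]| <= d.

(* A d-sequence of the graph (T, e), with n = #|T|:
   s 0 = G_n = G, s i = G_{n-i}, each s (i+1) obtained from s i by one
   contraction, all are d-trigraphs, and s (n-1) = G_1 has one vertex. *)
Definition d_sequence (T : finType) (e : rel T) (d : nat)
    (s : nat -> trigraph T) : Prop :=
  [/\ s 0 = graph_trigraph e,
      (forall i, i.+1 < #|T| -> contraction_step (s i) (s i.+1)),
      (forall i, i < #|T| -> d_trigraph d (s i)) &
      #|tverts (s #|T|.-1)| = 1].

Definition twin_width_le (T : finType) (e : rel T) (d : nat) : Prop :=
  exists s : nat -> trigraph T, d_sequence e d s.

From Stdlib Require Import Reals.
From Stdlib Require Import Lra Lia ZArith.
From mathcomp Require Import all_boot zify.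

Set Implicit Arguments.
Unset Strict Implicit.
Unset Printing Implicit Defensive.

(* The trigraphs along a contraction sequence are represented as quotients:
   a labelling f : T -> T partitions the vertices into the classes indexed by
   the fixed points of f, and the quotient trigraph has a black edge between
   two completely adjacent classes and a red edge between two classes that
   are adjacent but not completely.  Contracting two vertices of a quotient
   gives the quotient by the merged labelling (contract_represents), so a
   d-sequence exists as soon as some invariant on labellings holds for the
   discrete partition, can always be preserved by merging two classes, and
   bounds the red degree by d (quotient_twin_width).

   For a unit interval graph given by intervals [p x, p x + L], cut the line
   into columns [kL, (k+1)L): each column is a clique, two consecutive columns
   are joined according to the offsets of their vertices inside the columns,
   and farther columns are anticomplete.  The invariant is a sweep: vertices
   are swept by increasing offset, and each swept vertex joins the class of
   its column.  An unswept vertex is a singleton class never incident to a red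
   edge, and red edges between swept classes join consecutive columns only.
   Once everything is swept, the two lowest levels are fused repeatedly, so
   the classes remain indexed by consecutive levels (sweep_merge,
   sweep_red_degree); the main theorem combines the two parts. *)

Section Quotients.

Variables (T : finType) (e : rel T).

(* A labelling f : T -> T describes the partition of T into the classes
   cls f x = {a | f a = x}; the nonempty classes are indexed by the fixed
   points of f when f is idempotent. *)
Definition cls (f : T -> T) (x : T) : pred T := fun a => f a == x.
Definition reps (f : T -> T) : {set T} := [set x | f x == x].

Definition all_adj (P Q : pred T) : bool :=
  [forall a, forall b, P a && Q b ==> e a b].
Definition some_adj (P Q : pred T) : bool :=
  [exists a, exists b, [&& P a, Q b & e a b]].

Definition black_cls (f : T -> T) (x y : T) : bool :=
  (x != y) && all_adj (cls f x) (cls f y).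
Definition red_cls (f : T -> T) (x y : T) : bool :=
  [&& x != y, some_adj (cls f x) (cls f y) & ~~ all_adj (cls f x) (cls f y)].

Definition merge (f : T -> T) (u v : T) : T -> T :=
  fun a => if f a == v then u else f a.

Definition represents (H : trigraph T) (f : T -> T) : Prop :=
  tverts H = reps f /\ forall x y, x \in reps f -> y \in reps f ->
    tblack H x y = black_cls f x y /\ tred H x y = red_cls f x y.

Lemma all_adj_ext (P P' Q Q' : pred T) :
  P =1 P' -> Q =1 Q' -> all_adj P Q = all_adj P' Q'.
Proof.
by move=> eP eQ; apply: eq_forallb => a; apply: eq_forallb => b; rewrite eP eQ.
Qed.

Lemma some_adj_ext (P P' Q Q' : pred T) :
  P =1 P' -> Q =1 Q' -> some_adj P Q = some_adj P' Q'.
Proof.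
by move=> eP eQ; apply: eq_existsb => a; apply: eq_existsb => b; rewrite eP eQ.
Qed.

Lemma all_adjUl (P1 P2 Q : pred T) :
  all_adj [pred a | P1 a || P2 a] Q = all_adj P1 Q && all_adj P2 Q.
Proof.
apply/forallP/andP => [h|[/forallP h1 /forallP h2] a].
  by split; apply/forallP => a; apply/forallP => b; apply/implyP => /andP[Pa Qb];
     have /forallP/(_ b)/implyP := h a; rewrite /= Pa Qb ?orbT; apply.
apply/forallP => b; apply/implyP => /andP[/orP[Pa|Pa] Qb].
  by have /forallP/(_ b)/implyP := h1 a; rewrite Pa Qb; apply.
by have /forallP/(_ b)/implyP := h2 a; rewrite Pa Qb; apply.
Qed.

Lemma some_adjUl (P1 P2 Q : pred T) :
  some_adj [pred a | P1 a || P2 a] Q = some_adj P1 Q || some_adj P2 Q.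
Proof.
apply/existsP/orP => [[a /existsP[b /and3P[/orP[Pa|Pa] Qb eab]]]|].
- by left; apply/existsP; exists a; apply/existsP; exists b; rewrite Pa Qb eab.
- by right; apply/existsP; exists a; apply/existsP; exists b; rewrite Pa Qb eab.
by case=> /existsP[a /existsP[b /and3P[Pa Qb eab]]]; exists a;
   apply/existsP; exists b; rewrite /= Pa Qb eab ?orbT.
Qed.

Lemma all_adj_some_adj (P Q : pred T) a b :
  P a -> Q b -> all_adj P Q -> some_adj P Q.
Proof.
move=> Pa Qb /forallP/(_ a)/forallP/(_ b); rewrite Pa Qb /= => eab.
by apply/existsP; exists a; apply/existsP; exists b; rewrite Pa Qb eab.
Qed.

Lemma reps_fixed (f : T -> T) x : x \in reps f -> f x = x.
Proof. by rewrite inE => /eqP. Qed.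

Lemma black_or_red (f : T -> T) x y : x \in reps f -> y \in reps f ->
  black_cls f x y || red_cls f x y = (x != y) && some_adj (cls f x) (cls f y).
Proof.
move=> /reps_fixed fx /reps_fixed fy; rewrite /black_cls /red_cls.
case: (x != y) => //=; case all: (all_adj _ _); rewrite ?andbT //=.
by rewrite (all_adj_some_adj (a := x) (b := y) _ _ all) /cls ?fx ?fy.
Qed.

Lemma reps_merge (f : T -> T) u v :
  u \in reps f -> u != v -> reps (merge f u v) = reps f :\ v.
Proof.
move=> /reps_fixed fu uv; apply/setP=> x; rewrite !inE /merge.
have [fxv|fxv] := eqVneq (f x) v.
- rewrite fxv; have [xv|_] := eqVneq x v; first by rewrite xv (negbTE uv).
  by apply/negbTE; apply: contraNneq uv => ux; rewrite -fxv -ux fu.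
- by have [xv|//] := eqVneq x v; move: fxv; rewrite xv => /negbTE ->.
Qed.

Lemma cls_merge (f : T -> T) u v x : x != v ->
  cls (merge f u v) x =1 [pred a | cls f x a || (x == u) && cls f v a].
Proof.
move=> xv a; rewrite /cls /merge /=; have [fav|fav] := eqVneq (f a) v.
- by rewrite fav andbT (eq_sym v) (negbTE xv) eq_sym.
- by rewrite andbF orbF.
Qed.

Lemma red_cls_witness (f : T -> T) x y : red_cls f x y ->
  (exists a b, [/\ f a = x, f b = y & e a b]) /\
  (exists a b, [/\ f a = x, f b = y & ~~ e a b]).
Proof.
case/and3P => _ /existsP[a /existsP[b /and3P[/eqP fa /eqP fb eab]]].
rewrite negb_forall => /existsP[a']; rewrite negb_forall => /existsP[b'].
rewrite negb_imply => /andP[/andP[/eqP fa' /eqP fb'] nab].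
by split; [exists a, b | exists a', b'].
Qed.

Lemma merge_eq (f : T -> T) u v a b : u != v ->
  merge f u v a = merge f u v b <->
  f a = f b \/ (f a = u /\ f b = v) \/ (f a = v /\ f b = u).
Proof.
move=> /eqP uv; rewrite /merge.
have [fa|/eqP fa] := eqVneq (f a) v; have [fb|/eqP fb] := eqVneq (f b) v;
  intuition congruence.
Qed.

Lemma merge_idem (f : T -> T) u v : (forall x, f (f x) = f x) -> f u = u ->
  u != v -> forall x, merge f u v (merge f u v x) = merge f u v x.
Proof.
move=> f_idem fu uv x; rewrite /merge.
by have [_|fxv] := eqVneq (f x) v; rewrite ?fu ?f_idem ?(negbTE uv) ?(negbTE fxv).
Qed.

Hypothesis e_sym : symmetric e.

Lemma black_cls_sym (f : T -> T) x y : black_cls f x y = black_cls f y x.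
Proof.
rewrite /black_cls eq_sym; congr (_ && _); apply/forallP/forallP => h a;
by apply/forallP => b; apply/implyP => /andP[Pa Qb];
   have /forallP/(_ a)/implyP := h b; rewrite Pa Qb e_sym; apply.
Qed.

Lemma some_adj_sym (P Q : pred T) : some_adj P Q = some_adj Q P.
Proof.
by apply/existsP/existsP => -[a /existsP[b /and3P[Pa Qb eab]]];
   exists b; apply/existsP; exists a; rewrite Pa Qb e_sym.
Qed.

Lemma red_cls_sym (f : T -> T) x y : red_cls f x y = red_cls f y x.
Proof.
have := black_cls_sym f x y; rewrite /black_cls /red_cls eq_sym some_adj_sym.
by case: (y != x) => //= ->.
Qed.

Lemma merged_class_edges (f : T -> T) u v y :
  u \in reps f -> v \in reps f -> y \in reps f -> u != v -> y != u -> y != v ->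
  black_cls (merge f u v) u y = black_cls f u y && black_cls f v y /\
  red_cls (merge f u v) u y = ~~ (black_cls f u y && black_cls f v y) &&
     ((black_cls f u y || red_cls f u y) || (black_cls f v y || red_cls f v y)).
Proof.
move=> ur vr yr uv yu yv.
have clsu : cls (merge f u v) u =1 [pred a | cls f u a || cls f v a].
  by move=> a; rewrite cls_merge //= eqxx.
have clsy : cls (merge f u v) y =1 cls f y.
  by move=> a; rewrite cls_merge //= (negbTE yu) orbF.
rewrite !black_or_red // /black_cls /red_cls (all_adj_ext clsu clsy).
rewrite (some_adj_ext clsu clsy) all_adjUl some_adjUl (eq_sym u y) (eq_sym v y) yu yv /=.
by split; last rewrite andbC.
Qed.

Lemma contract_represents (H : trigraph T) (f : T -> T) u v :
  represents H f -> u \in reps f -> v \in reps f -> u != v ->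
  represents (contract H u v u) (merge f u v).
Proof.
move=> [HV HE] ur vr uv; have Hreps := reps_merge ur uv.
have inV' x : (x \in u |: (tverts H :\ u :\ v)) = (x \in reps f :\ v).
  by rewrite HV !inE; have [->|] := eqVneq x u; rewrite ?uv ?(reps_fixed ur) ?eqxx.
split; first by apply/setP=> x; rewrite Hreps /= inV'.
move=> x y; rewrite Hreps !inE => /andP[xv xr] /andP[yv yr].
have xr' : x \in reps f by rewrite inE.
have yr' : y \in reps f by rewrite inE.
rewrite /contract /tadj /= !inV' !inE xv yv xr yr /=.
have [Bu Ru] := HE u _ ur yr'; have [Bv Rv] := HE v _ vr yr'.
have [Bu' Ru'] := HE u _ ur xr'; have [Bv' Rv'] := HE v _ vr xr'.
have [-> | xu] := eqVneq x u.
  have [-> | yu] := eqVneq y u; first by rewrite /black_cls /red_cls eqxx.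
  by rewrite /= Bu Bv Ru Rv; have [-> ->] := merged_class_edges ur vr yr' uv yu yv.
have [-> | yu] := eqVneq y u.
  rewrite xu Bu' Bv' Ru' Rv' (black_cls_sym (merge f u v)) (red_cls_sym (merge f u v)).
  by have [-> ->] := merged_class_edges ur vr xr' uv xu xv.
have clsx : cls (merge f u v) x =1 cls f x.
  by move=> a; rewrite cls_merge //= (negbTE xu) orbF.
have clsy : cls (merge f u v) y =1 cls f y.
  by move=> a; rewrite cls_merge //= (negbTE yu) orbF.
have [-> ->] := HE x y xr' yr'.
by rewrite /black_cls /red_cls (all_adj_ext clsx clsy) (some_adj_ext clsx clsy); case: (x != y).
Qed.

Lemma all_adj1 x y : all_adj (pred1 x) (pred1 y) = e x y.
Proof.
apply/forallP/idP => [/(_ x)/forallP/(_ y)|exy a]; first by rewrite /= !eqxx.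
by apply/forallP => b; apply/implyP => /andP[/eqP-> /eqP->].
Qed.

Lemma some_adj1 x y : some_adj (pred1 x) (pred1 y) = e x y.
Proof.
apply/existsP/idP => [[a /existsP[b /and3P[/eqP-> /eqP-> //]]]|exy].
by exists x; apply/existsP; exists y; rewrite /= !eqxx.
Qed.

Lemma graph_represents : irreflexive e -> represents (graph_trigraph e) id.
Proof.
move=> e_irr; have reps_id : reps id = [set: T] by apply/setP=> x; rewrite !inE eqxx.
split; first by rewrite reps_id.
move=> x y _ _; rewrite /black_cls /red_cls.
rewrite (all_adj_ext (P' := pred1 x) (Q' := pred1 y)) //.
rewrite (some_adj_ext (P' := pred1 x) (Q' := pred1 y)) // all_adj1 some_adj1 /=.
by have [->|] := eqVneq x y; rewrite ?e_irr //=; case: (e x y).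
Qed.

Lemma represents_d_trigraph (H : trigraph T) (f : T -> T) d :
  represents H f ->
  (forall x, x \in reps f -> #|[set y in reps f | red_cls f x y]| <= d) ->
  d_trigraph d H.
Proof.
move=> [HV HE] red_le x; rewrite HV => xr.
rewrite (eq_card (B := [set y in reps f | red_cls f x y])); first exact: red_le.
move=> y; rewrite !in_set; apply: andb_id2l => yr.
have yr' : y \in reps f by rewrite inE.
by have [_ ->] := HE x y xr yr'.
Qed.

End Quotients.

Section ContractionSequences.

Variables (T : finType) (e : rel T) (d : nat) (Inv : (T -> T) -> Prop).
Hypothesis e_sym : symmetric e.

Hypothesis Inv_merge : forall f, Inv f -> 1 < #|reps f| ->
  exists u v, [/\ u \in reps f, v \in reps f, u != v & Inv (merge f u v)].
Hypothesis Inv_red : forall f, Inv f -> forall x, x \in reps f ->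
  #|[set y in reps f | red_cls e f x y]| <= d.

Lemma quotient_sequence k : forall (H : trigraph T) (f : T -> T),
  Inv f -> represents e H f -> #|reps f| = k.+1 ->
  exists s : nat -> trigraph T, [/\ s 0 = H,
    (forall i, i < k -> contraction_step (s i) (s i.+1)),
    (forall i, i <= k -> d_trigraph d (s i)) & #|tverts (s k)| = 1].
Proof.
elim: k => [|k IH] H f Invf Hf card_f.
  exists (fun _ => H); split => //; last by case: Hf => ->.
  by move=> i _; apply: represents_d_trigraph Hf (Inv_red Invf).
have [|u [v [ur vr uv Inv']]] := Inv_merge Invf; first by rewrite card_f.
have Hmerged := contract_represents e_sym Hf ur vr uv.
have card' : #|reps (merge f u v)| = k.+1.
  by have := cardsD1 v (reps f); rewrite reps_merge // vr card_f add1n => -[].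
have [s [s0 s_step s_deg s_end]] := IH _ _ Inv' Hmerged card'.
exists (fun i => if i is j.+1 then s j else H); split => // [[|i] lt_ik|[|i] le_ik].
- rewrite s0; exists u, v, u; case: Hf => -> _.
  by split; rewrite // !inE eqxx andbF.
- exact: s_step.
- exact: represents_d_trigraph Hf (Inv_red Invf).
- exact: s_deg.
Qed.

Lemma quotient_twin_width : 0 < #|T| -> irreflexive e -> Inv id ->
  twin_width_le e d.
Proof.
move=> T_gt0 e_irr Inv_id.
have card_id : #|reps (@id T)| = #|T|.-1.+1.
  by case: (graph_represents e_irr) => <- _; rewrite cardsT prednK.
have [s [s0 s_step s_deg s_end]] :=
  quotient_sequence Inv_id (graph_represents e_irr) card_id.
exists s; split => // i.
- by rewrite -{1}(prednK T_gt0) ltnS; apply: s_step.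
- by rewrite -{1}(prednK T_gt0) ltnS; apply: s_deg.
Qed.

End ContractionSequences.

Lemma card_le2 (T : finType) (S : {set T}) (g : T -> Z) (z1 z2 : Z) :
  {in S &, injective g} -> (forall y, y \in S -> g y = z1 \/ g y = z2) ->
  #|S| <= 2.
Proof.
move=> g_inj g_val; rewrite leqNgt; apply/card_gt2P.
move=> [x [y [z [[xS yS zS] [/eqP xy /eqP yz /eqP zx]]]]].
have gxy : g x <> g y by move/g_inj => /(_ xS yS).
have gyz : g y <> g z by move/g_inj => /(_ yS zS).
have gzx : g z <> g x by move/g_inj => /(_ zS xS).
have := g_val x xS; have := g_val y yS; have := g_val z zS; lia.
Qed.

Lemma exists_minimal (T : finType) (le : T -> T -> Prop) (A : {set T}) x0 :
  (forall x y, le x y \/ le y x) -> (forall x y z, le x y -> le y z -> le x z) ->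
  x0 \in A -> exists2 m, m \in A & forall y, y \in A -> le m y.
Proof.
move=> le_total le_trans x0A.
suff [m mA m_min] : exists2 m, m \in enum A & forall y, y \in enum A -> le m y.
  by exists m => [|y yA]; [rewrite -mem_enum | apply: m_min; rewrite mem_enum].
have : enum A != [::] by apply: contraTneq x0A => eA; rewrite -mem_enum eA.
elim: (enum A) => [//|z s IH] _.
have le_refl w : le w w by case: (le_total w w).
case: s IH => [_|w s IH].
  by exists z => [|y]; rewrite ?mem_head // inE => /eqP->.
have [m ms m_min] := IH isT.
have [zm|mz] := le_total z m.
  exists z => [|y]; first exact: mem_head.
  by rewrite in_cons => /orP[/eqP->|/m_min]; [|apply: le_trans].
exists m => [|y]; first by rewrite in_cons ms orbT.
by rewrite in_cons => /orP[/eqP->|/m_min].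
Qed.

Section UnitIntervalSweep.

Local Open Scope R_scope.

Lemma unit_intervals_meet (r a b : R) :
  (exists t : R, (Rle a t /\ Rle t (a + r)) /\ (Rle b t /\ Rle t (b + r))) <->
  a - b <= r /\ b - a <= r.
Proof.
split=> [[t [[? ?] [? ?]]]|[? ?]]; first lra.
exists (Rmax a b); have := Rmax_l a b; have := Rmax_r a b.
by destruct (Rle_dec a b); [rewrite Rmax_right | rewrite Rmax_left]; lra.
Qed.

Variables (T : finType) (e : rel T) (L : R) (p : T -> R).
Hypothesis L_gt0 : 0 < L.
Hypothesis e_sym : symmetric e.
Hypothesis adjE : forall x y, x != y -> (e x y <-> p x - p y <= L /\ p y - p x <= L).

Definition col (x : T) : Z := Int_part (p x / L).
Definition off (x : T) : R := p x - L * IZR (col x).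

Lemma off_bounds x : 0 <= off x < L.
Proof.
rewrite /off /col; have [lo hi] := base_Int_part (p x / L).
set k := IZR _ in lo hi *.
have px : p x = L * (p x / L) by field; lra.
split.
- have : L * k <= L * (p x / L) by apply: Rmult_le_compat_l; lra.
  lra.
- have : L * (p x / L) < L * (k + 1) by apply: Rmult_lt_compat_l; lra.
  lra.
Qed.

Lemma p_decomp x : p x = L * IZR (col x) + off x.
Proof. rewrite /off; ring. Qed.

Lemma same_col_adj x y : x != y -> col x = col y -> e x y.
Proof.
move=> xy cxy; apply/(adjE xy).
rewrite (p_decomp x) (p_decomp y) cxy.
have := off_bounds x; have := off_bounds y; lra.
Qed.

Lemma far_col_nonadj x y : (col x + 2 <= col y)%Z -> ~ e x y.
Proof.
move=> cxy exy; have xy : x != y by apply/eqP => yx; rewrite yx in cxy; lia.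
have [_] := (adjE xy).1 exy; rewrite (p_decomp x) (p_decomp y).
have : IZR (col x) + 2 <= IZR (col y) by rewrite -(plus_IZR _ 2); apply: IZR_le.
have := off_bounds x; have := off_bounds y; nra.
Qed.

Lemma next_col_adj x y : col y = (col x + 1)%Z -> (e x y <-> off y <= off x).
Proof.
move=> cxy; have xy : x != y by apply/eqP => yx; rewrite yx in cxy; lia.
rewrite (adjE xy) (p_decomp x) (p_decomp y) cxy plus_IZR.
have := off_bounds x; have := off_bounds y; split; [case=> ? ?|move=> ?]; [|split]; nra.
Qed.

Lemma adj_col_close x y : e x y -> (col x - 1 <= col y <= col x + 1)%Z.
Proof.
move=> exy; split; apply/Z.nlt_ge => lt.
- by apply: (far_col_nonadj (x := y) (y := x)); [lia | rewrite e_sym].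
- by apply: (far_col_nonadj (x := x) (y := y)); [lia | ].
Qed.

Definition before (x y : T) : Prop :=
  off x < off y \/ (off x = off y /\ (col y <= col x)%Z).

Lemma before_total x y : before x y \/ before y x.
Proof.
rewrite /before; have [lt|[eq|gt]] := Rtotal_order (off x) (off y); try tauto.
by have [] := Z.le_ge_cases (col y) (col x); [left | right]; right; split.
Qed.

Lemma before_trans x y z : before x y -> before y z -> before x z.
Proof.
rewrite /before => -[?|[? ?]] [?|[? ?]]; try (left; lra).
by right; split; [lra | lia].
Qed.

Lemma before_adj a y : a != y -> before a y ->
  e a y <-> (col a = col y \/ col a = col y + 1)%Z.
Proof.
move=> ay before_ay.
have [cay|[cay|[cay|far]]] : (col a = col y \/ col a = col y + 1 \/
    col y = col a + 1 \/ col a + 2 <= col y \/ col y + 2 <= col a)%Z by lia.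
- by split=> _; [left | exact: same_col_adj].
- split=> _; first by right.
  by rewrite e_sym; apply/(next_col_adj cay); case: before_ay => [|[]]; lra.
- split=> [eay|]; last lia.
  by have := (next_col_adj cay).1 eay; case: before_ay => [|[_]]; [lra | lia].
- split=> [eay|]; last lia.
  exfalso; case: far => far; first exact: far_col_nonadj far eay.
  by apply: far_col_nonadj far _; rewrite e_sym.
Qed.

(* The level of x when all columns <= c have been fused into one. *)
Definition level (c : Z) (x : T) : Z := Z.max (col x) c.

Definition same_class (M : {set T}) (c : Z) (x y : T) : Prop :=
  x = y \/ [/\ x \in M, y \in M & level c x = level c y].

(* The labelling f is a state of the sweep: M, the set of swept vertices, is
   an initial segment of the sweep order; c is the top of the lowest level,
   which is the lowest column as long as unswept vertices remain; the classes
   of f are those of same_class M c. *)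
Definition sweep_state (M : {set T}) (c : Z) (f : T -> T) : Prop :=
  [/\ forall x, f (f x) = f x,
      forall x y, x \in M -> y \notin M -> before x y,
      exists x0, (col x0 <= c)%Z,
      forall x y, y \notin M -> (c <= col x)%Z
    & forall x y, f x = f y <-> same_class M c x y].

Lemma unswept_singleton M c f y b :
  sweep_state M c f -> y \notin M -> f b = f y -> b = y.
Proof.
by case=> _ _ _ _ same yM /same [//|[_ yM' _]]; rewrite yM' in yM.
Qed.

(* An unswept vertex is never mixed with a class: the class members all lie
   in one column and are visited before it. *)
Lemma no_red_to_unswept M c f x y :
  sweep_state M c f -> y \notin M -> f y = y -> ~~ red_cls e f x y.
Proof.
move=> st yM fy; have [_ M_before _ c_low same] := st.
apply/negP => /red_cls_witness [[a [b [fa fb eab]]] [a' [b' [fa' fb' nab]]]].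
have eby : b = y by apply: (unswept_singleton st yM); rewrite fb fy.
have eb'y : b' = y by apply: (unswept_singleton st yM); rewrite fb' fy.
rewrite {}eby in eab; rewrite {}eb'y in nab.
have : f a = f a' by rewrite fa fa'.
case/same => [aa'|[aM a'M]]; first by move: nab; rewrite -aa' eab.
have ay : a != y by apply: contraNneq yM => <-.
have a'y : a' != y by apply: contraNneq yM => <-.
rewrite /level; have := c_low a y yM; have := c_low a' y yM => ? ? caa'.
move/negP: nab; apply; apply/(before_adj a'y (M_before _ _ a'M yM)).
by have /(before_adj ay (M_before _ _ aM yM)) := eab; lia.
Qed.

Lemma red_swept M c f x y : sweep_state M c f -> x \in reps f -> y \in reps f ->
  red_cls e f x y -> x \in M /\ y \in M.
Proof.
move=> st /reps_fixed fx /reps_fixed fy red_xy; split; apply/negPn/negP => nM.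
- by have := no_red_to_unswept y st nM fx; rewrite red_cls_sym // red_xy.
- by have := no_red_to_unswept x st nM fy; rewrite red_xy.
Qed.

(* Red edges of a sweep state join classes of consecutive levels, so each
   class has at most two red neighbours. *)
Lemma sweep_red_degree M c f x : sweep_state M c f -> x \in reps f ->
  (#|[set y in reps f | red_cls e f x y]| <= 2)%N.
Proof.
move=> st xr; have [_ _ _ _ same] := st; have fx := reps_fixed xr.
apply: (card_le2 (g := level c) (z1 := (level c x - 1)%Z) (z2 := (level c x + 1)%Z)).
  move=> y y' /setIdP[yr red_y] /setIdP[y'r red_y'] lev.
  have [_ yM] := red_swept st xr yr red_y.
  have [_ y'M] := red_swept st xr y'r red_y'.
  by rewrite -(reps_fixed yr) -(reps_fixed y'r); apply/same; right.
move=> y /setIdP[yr red_y]; have fy := reps_fixed yr.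
have [[a [b [fa fb eab]]] _] := red_cls_witness red_y.
have lev_a : level c a = level c x.
  by have /same [->|[]] : f a = f x by rewrite fa fx.
have lev_b : level c b = level c y.
  by have /same [->|[]] : f b = f y by rewrite fb fy.
have lev_xy : level c x <> level c y.
  have [xM yM] := red_swept st xr yr red_y.
  move=> lev; case/and3P: red_y => /eqP[]; rewrite -fx -fy; apply/same.
  by right.
by have := adj_col_close eab; move: lev_a lev_b lev_xy; rewrite /level; lia.
Qed.

Lemma sweep_start m : (forall x, (col m <= col x)%Z) -> sweep_state set0 (col m) id.
Proof.
move=> m_min; split.
- by [].
- by move=> x y; rewrite inE.
- by exists m; lia.
- by move=> x y _; apply: m_min.
- by move=> x y; split=> [->|[//|[]]]; [left | rewrite inE].
Qed.

Lemma sweep_extend M c f y : sweep_state M c f -> y \notin M ->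
  (forall z, z \notin M -> before y z) -> (forall x, x \in M -> col x <> col y) ->
  sweep_state (y |: M) c f.
Proof.
move=> [f_idem M_before x0c c_low same] yM y_first y_new; split => //.
- move=> a b; rewrite !inE => /orP[/eqP->|aM] /norP[_ bM]; [exact: y_first | exact: M_before].
- by move=> a b; rewrite !inE => /norP[_ bM]; apply: c_low bM.
have col_lev z : level c z = col z by rewrite /level Z.max_l //; apply: c_low _ _ yM.
have lev_y z : z \in M -> level c z <> level c y by rewrite !col_lev; apply: y_new.
move=> a b; rewrite same /same_class !inE.
split=> [[->|[aM bM ab]]|[->|[/orP[/eqP ay|aM] /orP[/eqP by'|bM] ab]]];
  rewrite ?aM ?bM ?orbT; try by [left | right].
- by rewrite ay by'; left.
- by exfalso; apply: (lev_y b bM); rewrite -ab ay.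
- by exfalso; apply: (lev_y a aM); rewrite ab by'.
Qed.

Lemma sweep_absorb M c f x y : sweep_state M c f -> y \notin M ->
  (forall z, z \notin M -> before y z) -> x \in M -> col x = col y ->
  [/\ f x \in reps f, y \in reps f, f x != y &
      sweep_state (y |: M) c (merge f (f x) y)].
Proof.
move=> st yM y_first xM cxy; have [f_idem M_before x0c c_low same] := st.
have fy : f y = y by apply: (unswept_singleton st yM); rewrite f_idem.
have xr : f x \in reps f by rewrite inE f_idem.
have yr : y \in reps f by rewrite inE fy.
have col_lev z : level c z = col z by rewrite /level Z.max_l //; apply: c_low _ _ yM.
have cls_x z : f z = f x <-> z \in M /\ col z = col y.
  rewrite same -cxy -!col_lev; split=> [[->|[]]|[zM lz]]; by [|right].
have cls_y z : f z = y <-> z = y.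
  by rewrite -{1}fy; split=> [/(unswept_singleton st yM)|->].
have xy : f x != y by apply/eqP => /cls_y xy; rewrite -xy xM in yM.
split=> //; split.
- exact: merge_idem (f_idem x) xy.
- move=> a b; rewrite !inE => /orP[/eqP->|aM] /norP[_ bM]; [exact: y_first | exact: M_before].
- by [].
- by move=> a b; rewrite !inE => /norP[_ bM]; apply: c_low bM.
move=> a b; rewrite merge_eq // same cls_x cls_x !cls_y /same_class !inE !col_lev.
split=> [[[->|[aM bM ab]]|[[[aM ay] ->]|[-> [bM by']]]]|];
  rewrite ?aM ?bM ?eqxx ?orbT; try by [left | right].
move=> [->|[/orP[/eqP->|aM] /orP[/eqP->|bM] ab]]; try by [left; left].
- by right; right.
- by right; left.
- by left; right.
Qed.

Lemma swept_same_class (M : {set T}) c a b :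
  (forall y, y \in M) -> same_class M c a b <-> level c a = level c b.
Proof. by move=> allM; rewrite /same_class !allM; split=> [[->|[]]|]; by [|right]. Qed.

(* After the sweep, fuse the lowest level with the next one: raise c to the
   next column above it. *)
Lemma sweep_fuse (M : {set T}) c f : sweep_state M c f -> (forall y, y \in M) ->
  (1 < #|reps f|)%N ->
  exists u v, [/\ u \in reps f, v \in reps f, u != v &
                  exists d, sweep_state M d (merge f u v)].
Proof.
move=> [f_idem M_before [x0 x0c] c_low same] allM.
have sameM a b : f a = f b <-> level c a = level c b by rewrite same swept_same_class.
move=> /card_gt1P [r1 [r2 [/reps_fixed fr1 /reps_fixed fr2 /eqP r12]]].
have [/existsP[y0 /Z.ltb_spec0 y0c]|/existsPn all_low] :=
  boolP [exists y, (c <? col y)%Z]; last first.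
  by case: r12; rewrite -fr1 -fr2; apply/sameM; have := all_low r1;
     have := all_low r2; rewrite /level => /Z.ltb_spec0 ? /Z.ltb_spec0 ?; lia.
have [y /[!inE] /Z.ltb_spec0 yc y_min] :=
  exists_minimal (le := fun x y => (col x <= col y)%Z)
    (A := [set y | (c <? col y)%Z]) (x0 := y0) ltac:(lia) ltac:(lia)
    ltac:(by rewrite inE; apply/Z.ltb_spec0).
have gap a : (col a <= c \/ col y <= col a)%Z.
  have [/Z.ltb_spec0 ac|/Z.ltb_spec0 ?] := boolP (c <? col a)%Z; last lia.
  by right; apply: y_min; rewrite inE; apply/Z.ltb_spec0.
have cls_x0 a : f a = f x0 <-> level c a = c by rewrite sameM /level; lia.
have cls_y a : f a = f y <-> level c a = col y by rewrite sameM /level; lia.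
have x0y : f x0 != f y by apply/eqP => /(cls_y x0); rewrite /level; lia.
exists (f x0), (f y); split; rewrite ?inE ?f_idem //; exists (col y); split => //.
- exact: merge_idem (f_idem x0) x0y.
- by exists x0; lia.
- by move=> a b; rewrite allM.
move=> a b; rewrite merge_eq // sameM !cls_x0 !cls_y swept_same_class //.
by have := gap a; have := gap b; rewrite /level; lia.
Qed.

Lemma sweep_merge (M : {set T}) c f : sweep_state M c f -> (1 < #|reps f|)%N ->
  exists u v, [/\ u \in reps f, v \in reps f, u != v &
                  exists M' c', sweep_state M' c' (merge f u v)].
Proof.
have [n] := ubnP #|~: M|; elim: n M => // n IH M.
rewrite ltnS => card_M st gt1.
have [allM|] := boolP [forall y, y \in M].
  have [u [v [ur vr uv [d st']]]] := sweep_fuse st (fun y => forallP allM y) gt1.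
  by exists u, v; split=> //; exists M, d.
rewrite negb_forall => /existsP[y0 y0M].
have [y /[!inE] yM y_first] :=
  exists_minimal (A := ~: M) (x0 := y0) before_total before_trans ltac:(by rewrite inE).
have {}y_first z : z \notin M -> before y z by move=> zM; apply: y_first; rewrite inE.
have [/existsP[x /andP[xM /Z.eqb_spec cxy]]|/existsPn y_new] :=
  boolP [exists x, (x \in M) && (col x =? col y)%Z].
  have [xr yr xy st'] := sweep_absorb st yM y_first xM cxy.
  by exists (f x), y; split=> //; exists (y |: M), c.
apply: IH (sweep_extend st yM y_first _) gt1.
  by have := cardsC M; have := cardsC (y |: M); rewrite cardsU1 yM; lia.
by move=> x xM /Z.eqb_spec cxy; have := y_new x; rewrite xM cxy.
Qed.

End UnitIntervalSweep.

Theorem mainTheorem5 (T : finType) (e : rel T) :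
  0 < #|T| -> simple_graph e -> unit_interval_graph e -> twin_width_le e 2.
Proof.
move=> T_gt0 [e_sym e_irr] [L [p [L_gt0 intervals]]].
have adjE x y (xy : x != y) := iff_trans (intervals x y xy) (unit_intervals_meet L (p x) (p y)).
pose sweeping f := exists M c, sweep_state L p M c f.
apply: (@quotient_twin_width _ _ _ sweeping) => //.
- move=> f [M [c st]] gt1.
  have [u [v [ur vr uv [M' [c' st']]]]] := sweep_merge st gt1.
  by exists u, v; split=> //; exists M', c'.
- by move=> f [M [c st]] x xr; exact: (sweep_red_degree L_gt0 e_sym adjE st xr).
have [x0 _] := card_gt0P T_gt0.
have [m _ m_min] := exists_minimal (le := fun x y => (col L p x <= col L p y)%Z)
  (A := setT) (x0 := x0) ltac:(lia) ltac:(lia) (in_setT x0).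
by exists set0, (col L p m); apply: sweep_start => x; apply: m_min.
Qed.
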